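(* Let $k$ be a unital commutative ring, $n$ a positive integer, and let $\varepsilon\in k$ be invertible. Then there is an isomorphism of graded $k$-modules \[\operatorname{Ext}^{\star}_{\mathcal{R}_n(\varepsilon)}(\mathbf{1},\mathbf{1})\cong H^\star(\Sigma_n,\mathbf{1}).\]
   Context: A rook $n$-diagram is a graph on vertices $1,\dots,n$ (left column, top to bottom) and $\bar1,\dots,\bar n$ (right column) each of whose connected components is either an isolated vertex or a single edge joining a left vertex to a right vertex (a propagating edge). The rook algebra $\mathcal{R}_n(\varepsilon)$ is the free $k$-module on rook $n$-diagrams with product: identify the right column of $d_1$ with the left column of $d_2$ (middle column); let $\beta$ be the number of connected components lying entirely in the middle column (isolated middle vertices); let $d_3$ join two outer vertices iff they are joined by a path; $d_1d_2=\varepsilon^\beta d_3$. The identity has edges $\{i,\bar i\}$. The augmentation $\tau$ sends diagrams with $n$ propagating edges to $1$ and all others to $0$; $\mathbf{1}$ is $k$ with the algebra acting via $\tau$. $H^\star(\Sigma_n,\mathbf{1})$ is group cohomology with trivial coefficients $k$. *)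

From HB Require Import structures.
From mathcomp Require Import all_boot all_order all_algebra all_fingroup.
Set Implicit Arguments. Unset Strict Implicit. Unset Printing Implicit Defensive.
Import GRing.Theory.
Local Open Scope ring_scope.

(* Bar-complex cohomology of an augmented k-algebra A that is free     *)
(* over k with a basis D closed under multiplication up to a scalar:   *)
(* mul a b = (c, d) means a * b = c * d in A; aug : D -> k is the      *)
(* augmentation on basis elements (k is the module 1 via aug).         *)
(* Since A and k are k-free, Ext^q_A(1,1) is the q-th cohomology of    *)
(* Hom_A(Bar(A) (x)_A 1, 1) = Hom_k(A^{(x)q}, k) = functions D^q -> k, *)
(* with the bar differential                                           *)
(*  (df)(a1..a_{q+1}) = aug a1 f(a2..) + sum_i (-1)^i f(..a_i a_{i+1}..)*)
(*                      + (-1)^{q+1} f(a1..a_q) aug a_{q+1}.            *)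
(* A degree-q cochain is a function seq D -> k, only its values on     *)
(* sequences of size q matter.                                         *)

Section Bar.
Variables (k : comPzRingType) (D : Type) (mul : D -> D -> k * D) (aug : D -> k).

Definition bar_merge (f : seq D -> k) (s : seq D) (i : nat) : k :=
  match drop i s with
  | a :: b :: r => (mul a b).1 * f (take i s ++ (mul a b).2 :: r)
  | _ => 0
  end.

Definition bar_delta (q : nat) (f : seq D -> k) (s : seq D) : k :=
  (match s with x :: t => aug x * f t | [::] => 0 end)
  + \sum_(i < q) (-1) ^+ i.+1 * bar_merge f s i
  + (match s with x :: t => (-1) ^+ q.+1 * f (take q s) * aug (last x t)
                | [::] => 0 end).

Definition is_cocycle (q : nat) (f : seq D -> k) : Prop :=
  forall s, size s = q.+1 -> bar_delta q f s = 0.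

Definition is_coboundary (q : nat) (f : seq D -> k) : Prop :=
  match q with
  | 0 => forall s, size s = 0 -> f s = 0
  | p.+1 => exists y : seq D -> k,
      forall s, size s = p.+1 -> bar_delta p y s = f s
  end.

End Bar.

(* phi : C1 -> C2 induces a well-defined k-linear map H^q_1 -> H^q_2 *)
Definition induces_hom (k : comPzRingType) (D1 D2 : Type)
  (mul1 : D1 -> D1 -> k * D1) (aug1 : D1 -> k)
  (mul2 : D2 -> D2 -> k * D2) (aug2 : D2 -> k) (q : nat)
  (phi : (seq D1 -> k) -> (seq D2 -> k)) : Prop :=
  [/\ forall z, is_cocycle mul1 aug1 q z -> is_cocycle mul2 aug2 q (phi z),
      forall z, is_coboundary mul1 aug1 q z -> is_coboundary mul2 aug2 q (phi z)
    & forall (c : k) z z', is_cocycle mul1 aug1 q z -> is_cocycle mul1 aug1 q z' ->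
        is_coboundary mul2 aug2 q
          (fun s => phi (fun t => c * z t + z' t) s - (c * phi z s + phi z' s))].

(* H^q_1 and H^q_2 are isomorphic k-modules (every isomorphism of the  *)
(* quotient modules lifts, by choice, to such a pair phi, psi).        *)
Definition bar_H_iso (k : comPzRingType) (D1 D2 : Type)
  (mul1 : D1 -> D1 -> k * D1) (aug1 : D1 -> k)
  (mul2 : D2 -> D2 -> k * D2) (aug2 : D2 -> k) (q : nat) : Prop :=
  exists (phi : (seq D1 -> k) -> (seq D2 -> k)) (psi : (seq D2 -> k) -> (seq D1 -> k)),
  [/\ induces_hom mul1 aug1 mul2 aug2 q phi,
      induces_hom mul2 aug2 mul1 aug1 q psi,
      forall z, is_cocycle mul1 aug1 q z ->
        is_coboundary mul1 aug1 q (fun s => psi (phi z) s - z s)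
    & forall z, is_cocycle mul2 aug2 q z ->
        is_coboundary mul2 aug2 q (fun s => phi (psi z) s - z s)].

Definition graded_H_iso (k : comPzRingType) (D1 D2 : Type)
  (mul1 : D1 -> D1 -> k * D1) (aug1 : D1 -> k)
  (mul2 : D2 -> D2 -> k * D2) (aug2 : D2 -> k) : Prop :=
  forall q : nat, bar_H_iso mul1 aug1 mul2 aug2 q.

(* Rook n-diagrams: partial injections from the left column 'I_n to   *)
(* the right column 'I_n (f i = Some j : propagating edge {i, bar j}). *)

Definition rook_inj n (f : {ffun 'I_n -> option 'I_n}) : Prop :=
  forall i j x, f i = Some x -> f j = Some x -> i = j.

Definition rook n := {f : {ffun 'I_n -> option 'I_n} | rook_inj f}.

Definition rook_comp_fun n (d1 d2 : rook n) : {ffun 'I_n -> option 'I_n} :=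
  [ffun i => obind (sval d2) (sval d1 i)].

Lemma rook_comp_inj n (d1 d2 : rook n) : rook_inj (rook_comp_fun d1 d2).
Proof.
case: d1 d2 => [f1 h1] [f2 h2] i j x; rewrite /rook_comp_fun !ffunE /=.
case E1: (f1 i) => [a|] //= Ha; case E2: (f1 j) => [b|] //= Hb.
have ab : a = b by apply: (h2 _ _ x).
by subst b; apply: (h1 _ _ a).
Qed.

Definition rook_comp n (d1 d2 : rook n) : rook n :=
  exist _ (rook_comp_fun d1 d2) (@rook_comp_inj n d1 d2).

(* number of connected components lying entirely in the middle column:
   middle vertices j hit by no edge of d1 and with no edge in d2 *)
Definition rook_beta n (d1 d2 : rook n) : nat :=
  #|[pred j : 'I_n | [forall i, sval d1 i != Some j] && (sval d2 j == None)]|.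

(* product in R_n(eps) on basis diagrams: d1 d2 = eps^beta d3 *)
Definition rook_mul (k : comPzRingType) n (eps : k) (d1 d2 : rook n) : k * rook n :=
  (eps ^+ rook_beta d1 d2, rook_comp d1 d2).

Definition rook_aug (k : comPzRingType) n (d : rook n) : k :=
  if [forall i, sval d i != None] then 1 else 0.

(* group algebra k[Sigma_n], trivial module: H^*(Sigma_n, 1) is the   *)
(* cohomology of the standard (inhomogeneous) cochain complex, which  *)
(* is the bar complex above for basis Sigma_n and augmentation 1.     *)
Definition sym_mul (k : comPzRingType) n (g h : {perm 'I_n}) : k * {perm 'I_n} :=
  (1, (g * h)%g).

Definition sym_aug (k : comPzRingType) n (g : {perm 'I_n}) : k := 1.

(* The alternating sum [z = sum_A (- eps^-1)^(n - #|A|) id_A], i.e. the product over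
   i of [1 - eps^-1 id_([n] - i)], is a central idempotent of R_n(eps) that kills
   every diagram with fewer than n propagating edges and has augmentation 1, so
   z R_n(eps) is k Sigma_n.  For any augmented algebra with such an idempotent the
   cochain map [g |-> g (z b1, ..., z bq)] is homotopic to the identity, through an
   explicit homotopy inserting [1 - z].  Restriction along k Sigma_n -> R_n(eps) and
   extension by zero along the projection R_n(eps) -> k Sigma_n, which kills the
   non-permutation diagrams, are then mutually inverse on cohomology: one composite
   is the identity on cochains, and by the homotopy every cocycle is cohomologous to
   one vanishing on all sequences containing a non-permutation, on which the other
   composite is the identity. *)

From mathcomp Require Import all_boot all_order all_algebra all_fingroup.
From mathcomp Require Import ring zify.
From Stdlib Require Import FunctionalExtensionality ProofIrrelevance.
Set Implicit Arguments. Unset Strict Implicit. Unset Printing Implicit Defensive.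
Import GRing.Theory.
Local Open Scope ring_scope.

Lemma congr_op (k T U : Type) (Phi : (T -> k) -> U -> k) f1 f2 u :
  f1 =1 f2 -> Phi f1 u = Phi f2 u.
Proof. by move=> /functional_extensionality ->. Qed.
Arguments congr_op {k T U} Phi {f1 f2 u}.

Section LinearOperators.
Variables (k : comPzRingType) (T U : Type).

Definition linop (Phi : (T -> k) -> U -> k) : Prop :=
  forall c f1 f2 u, Phi (fun t => c * f1 t + f2 t) u = c * Phi f1 u + Phi f2 u.

Variables (Phi : (T -> k) -> U -> k) (Phi_lin : linop Phi).

Lemma linop0 u : Phi (fun _ => 0) u = 0.
Proof.
have : Phi (fun _ => 0) u = Phi (fun t => 1 * 0 + 0) u.
  by apply: congr_op => t; rewrite mul1r addr0.
rewrite Phi_lin mul1r => /(congr1 (fun x => x - Phi (fun _ => 0) u)).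
by rewrite subrr addrK.
Qed.

Lemma linopZ c f u : Phi (fun t => c * f t) u = c * Phi f u.
Proof.
rewrite -[RHS]addr0 -(linop0 u) -Phi_lin; apply: congr_op => t; by rewrite addr0.
Qed.

Lemma linopD f1 f2 u : Phi (fun t => f1 t + f2 t) u = Phi f1 u + Phi f2 u.
Proof. rewrite -[Phi f1 u]mul1r -Phi_lin; apply: congr_op => t; by rewrite mul1r. Qed.

Lemma linopN f u : Phi (fun t => - f t) u = - Phi f u.
Proof. rewrite -mulN1r -linopZ; apply: congr_op => t; by rewrite mulN1r. Qed.

Lemma linopB f1 f2 u : Phi (fun t => f1 t - f2 t) u = Phi f1 u - Phi f2 u.
Proof. by rewrite linopD linopN. Qed.

End LinearOperators.

Section FormalCombinations.
Variables (k : comPzRingType) (D : Type) (mul : D -> D -> k * D).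

(* Elements of the algebra are formal combinations [x : seq (k * D)] of basis
   elements; [ev x F] evaluates the linear extension of [F : D -> k] at [x]. *)
Definition ev (x : seq (k * D)) (F : D -> k) : k := \sum_(p <- x) p.1 * F p.2.

Lemma ev_cons p x F : ev (p :: x) F = p.1 * F p.2 + ev x F.
Proof. by rewrite /ev big_cons. Qed.

Lemma eq_ev x F G : F =1 G -> ev x F = ev x G.
Proof. by move=> eqFG; apply: eq_bigr => p _; rewrite eqFG. Qed.

Lemma ev0 x : ev x (fun _ => 0) = 0.
Proof. by rewrite /ev big1 // => p _; rewrite mulr0. Qed.

Lemma evD x F G : ev x (fun d => F d + G d) = ev x F + ev x G.
Proof. by rewrite /ev -big_split; apply: eq_bigr => p _; rewrite mulrDr. Qed.

Lemma evZ x c F : ev x (fun d => c * F d) = c * ev x F.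
Proof. by rewrite /ev mulr_sumr; apply: eq_bigr => p _; rewrite mulrCA. Qed.

Lemma evZr x c F : ev x (fun d => F d * c) = ev x F * c.
Proof. by rewrite mulrC -evZ; apply: eq_ev => d; rewrite mulrC. Qed.

Lemma evN x F : ev x (fun d => - F d) = - ev x F.
Proof. by rewrite -mulN1r -evZ; apply: eq_ev => d; rewrite mulN1r. Qed.

Lemma evB x F G : ev x (fun d => F d - G d) = ev x F - ev x G.
Proof. by rewrite evD evN. Qed.

Lemma ev_exch x y (G : D -> D -> k) :
  ev x (fun d => ev y (G d)) = ev y (fun e => ev x (G^~ e)).
Proof.
rewrite /ev; under eq_bigr do rewrite mulr_sumr.
rewrite exchange_big /=; apply: eq_bigr => q _; rewrite mulr_sumr.
by apply: eq_bigr => p _; rewrite mulrCA.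
Qed.

Definition cbasis (d : D) : seq (k * D) := [:: (1, d)].

Lemma ev_basis d F : ev (cbasis d) F = F d.
Proof. by rewrite /ev big_seq1 mul1r. Qed.

Definition copp (x : seq (k * D)) : seq (k * D) := [seq (- p.1, p.2) | p <- x].

Lemma ev_copp x F : ev (copp x) F = - ev x F.
Proof. by rewrite /ev big_map -sumrN; apply: eq_bigr => p _; rewrite mulNr. Qed.

Definition cmul (x y : seq (k * D)) : seq (k * D) :=
  [seq (p.1 * q.1 * (mul p.2 q.2).1, (mul p.2 q.2).2) | p <- x, q <- y].

Lemma ev_cmul x y F :
  ev (cmul x y) F = ev x (fun d => ev y (fun e => (mul d e).1 * F (mul d e).2)).
Proof.
elim: x => [|p x IH]; first by rewrite /ev !big_nil.
rewrite ev_cons -IH /cmul /= /ev big_cat big_map mulr_sumr; congr (_ + _).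
by apply: eq_bigr => q _ /=; rewrite !mulrA.
Qed.

Definition lcons (x : seq (k * D)) (g : seq D -> k) : seq D -> k :=
  fun t => ev x (fun d => g (d :: t)).

Definition lcons_mul (x : seq (k * D)) (g : seq D -> k) (u : seq D) : k :=
  if u is d :: t then ev x (fun e => (mul e d).1 * g ((mul e d).2 :: t)) else 0.

Lemma lcons0 x : lcons x (fun _ => 0) = fun _ => 0.
Proof. by apply: functional_extensionality => t; exact: ev0. Qed.

Lemma lcons_linop x : linop (lcons x).
Proof. by move=> c f1 f2 t; rewrite /lcons evD evZ. Qed.

End FormalCombinations.

Section BarDifferential.
Variables (k : comPzRingType) (D : Type) (mul : D -> D -> k * D) (aug : D -> k).
Local Notation delta := (bar_delta mul aug).

Lemma bar_delta_linop p : linop (delta p).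
Proof.
move=> c f1 f2 s; rewrite /bar_delta.
have -> : \sum_(i < p) (-1) ^+ i.+1 * bar_merge mul (fun t => c * f1 t + f2 t) s i =
    c * \sum_(i < p) (-1) ^+ i.+1 * bar_merge mul f1 s i
    + \sum_(i < p) (-1) ^+ i.+1 * bar_merge mul f2 s i.
  rewrite mulr_sumr -big_split; apply: eq_bigr => i _ /=.
  by rewrite /bar_merge; case: (drop i s) => [|a [|b r]] /=; ring.
by case: s => [|x t] /=; ring.
Qed.

Lemma bar_delta_ev p x (G : D -> seq D -> k) s :
  delta p (fun t => ev x (G^~ t)) s = ev x (fun d => delta p (G d) s).
Proof.
elim: x => [|q x IH].
  rewrite [RHS]big_nil -(linop0 (bar_delta_linop p) s).
  by apply: (congr_op (delta p)) => t; rewrite /ev big_nil.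
rewrite ev_cons -IH -bar_delta_linop.
by apply: (congr_op (delta p)) => t; rewrite ev_cons.
Qed.

Lemma bar_delta_deg0 g a : delta 0 g [:: a] = 0.
Proof. by rewrite /bar_delta big_ord0 /=; ring. Qed.

Lemma bar_delta_cons2 p g a b s :
  delta p.+1 g [:: a, b & s] =
  aug a * g (b :: s) - (mul a b).1 * g ((mul a b).2 :: s) + aug b * g (a :: s)
  - delta p (fun t => g (a :: t)) (b :: s).
Proof.
rewrite /bar_delta big_ord_recl /=.
have -> : \sum_(i < p) (-1) ^+ (bump 0 i).+1 * bar_merge mul g [:: a, b & s] (bump 0 i) =
    - \sum_(i < p) (-1) ^+ i.+1 * bar_merge mul (fun t => g (a :: t)) (b :: s) i.
  by rewrite -sumrN; apply: eq_bigr => i _; rewrite /bump /= add1n exprS mulN1r mulNr.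
move: (\sum_(i < p) _) => S.
by rewrite /bar_merge /= !exprS; ring.
Qed.

Lemma bar_delta_lcons p x g b s :
  delta p (lcons x g) (b :: s) =
  ev x aug * g (b :: s) - lcons_mul mul x g (b :: s) + aug b * lcons x g s
  - lcons x (delta p.+1 g) (b :: s).
Proof.
rewrite /lcons /lcons_mul bar_delta_ev -evZr -evB -evZ -evD -evB.
by apply: eq_ev => d; rewrite bar_delta_cons2; ring.
Qed.

Lemma is_coboundary_vanishing q f :
  (forall s, size s = q -> f s = 0) -> is_coboundary mul aug q f.
Proof.
case: q => [//|p] f0; exists (fun _ => 0) => s hs.
by rewrite (linop0 (bar_delta_linop p)) f0.
Qed.

End BarDifferential.

Arguments cbasis {k D} d.

Section CentralIdempotent.
Variables (k : comPzRingType) (D : Type) (mul : D -> D -> k * D) (aug : D -> k).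
Variables (one : D) (z : seq (k * D)).
Hypothesis mul1d : forall d, mul one d = (1, d).
Hypothesis muld1 : forall d, mul d one = (1, d).
Hypothesis mulA_coef : forall a b c,
  (mul a b).1 * (mul (mul a b).2 c).1 = (mul b c).1 * (mul a (mul b c).2).1.
Hypothesis mulA_basis : forall a b c, (mul (mul a b).2 c).2 = (mul a (mul b c).2).2.
Hypothesis z_central : forall d F,
  ev (cmul mul (cbasis d) z) F = ev (cmul mul z (cbasis d)) F.
Hypothesis z_idem : forall F, ev (cmul mul z z) F = ev z F.
Hypothesis aug_zmul : forall d, ev (cmul mul z (cbasis d)) aug = aug d.

Local Notation delta := (bar_delta mul aug).
Local Notation cm := (cmul mul).

Lemma cmulA x y u F : ev (cm (cm x y) u) F = ev (cm x (cm y u)) F.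
Proof.
rewrite !ev_cmul; apply: eq_ev => a; rewrite !ev_cmul; apply: eq_ev => b.
rewrite -evZ; apply: eq_ev => c; rewrite mulA_basis mulrA mulA_coef; ring.
Qed.

Lemma ev_cmull x x' y F : (forall G, ev x G = ev x' G) -> ev (cm x y) F = ev (cm x' y) F.
Proof. by move=> exx'; rewrite !ev_cmul. Qed.

Lemma ev_cmulr x y y' F : (forall G, ev y G = ev y' G) -> ev (cm x y) F = ev (cm x y') F.
Proof. by move=> eyy'; rewrite !ev_cmul; apply: eq_ev => d. Qed.

Definition zmul (b : D) : seq (k * D) := cm z (cbasis b).

Definition zcompl : seq (k * D) := (1, one) :: copp z.

Lemma ev_zmul b F : ev (zmul b) F = ev z (fun d => (mul d b).1 * F (mul d b).2).
Proof. by rewrite /zmul ev_cmul; apply: eq_ev => d; rewrite ev_basis. Qed.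

Lemma ev_zcompl F : ev zcompl F = F one - ev z F.
Proof. by rewrite ev_cons ev_copp mul1r. Qed.

Lemma ev_zmul1 F : ev (zmul one) F = ev z F.
Proof. by rewrite ev_zmul; apply: eq_ev => d; rewrite muld1 mul1r. Qed.

Lemma ev_zcompl_aug : ev zcompl aug = 0.
Proof. by rewrite ev_zcompl -ev_zmul1 aug_zmul subrr. Qed.

Lemma ev_zcompl_mulr a F :
  ev zcompl (fun e => (mul e a).1 * F (mul e a).2) = F a - ev (zmul a) F.
Proof. by rewrite ev_zcompl mul1d mul1r ev_zmul. Qed.

Lemma zmul_z a F : ev (cm (zmul a) z) F = ev (zmul a) F.
Proof.
rewrite /zmul cmulA (@ev_cmulr _ _ (cm z (cbasis a))) => [|G]; last exact: z_central.
by rewrite -cmulA (@ev_cmull _ z) => // G; exact: z_idem.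
Qed.

Lemma ev_cmul_zcompl x F : ev (cm x zcompl) F = ev x F - ev (cm x z) F.
Proof.
rewrite !ev_cmul -evB; apply: eq_ev => d.
by rewrite ev_zcompl muld1 mul1r.
Qed.

Lemma lcons_zcompl_zmul a g t : lcons zcompl (lcons_mul mul (zmul a) g) t = 0.
Proof.
rewrite /lcons /= ev_exch.
transitivity (ev (cm (zmul a) zcompl) (fun d => g (d :: t))); first by rewrite ev_cmul.
by rewrite ev_cmul_zcompl zmul_z subrr.
Qed.

Lemma lcons_zmul_zmul a b g t :
  lcons (zmul b) (lcons_mul mul (zmul a) g) t = (mul a b).1 * lcons (zmul (mul a b).2) g t.
Proof.
rewrite /lcons /= ev_exch.
transitivity (ev (cm (zmul a) (zmul b)) (fun d => g (d :: t))); first by rewrite ev_cmul.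
rewrite /zmul cmulA.
rewrite (@ev_cmulr _ _ (cm z (cm (cbasis a) (cbasis b)))); last first.
  move=> G; rewrite -cmulA (@ev_cmull _ (cm z (cbasis a))) => [|H]; last exact: z_central.
  by rewrite cmulA.
rewrite -cmulA (@ev_cmull _ z) => [|G]; last exact: z_idem.
rewrite ev_cmul ev_zmul -evZ; apply: eq_ev => d.
by rewrite ev_cmul !ev_basis.
Qed.

(* Closed forms, with every [g] extended multilinearly:
   [htpy g [:: b1; ..; bq] = - sum_i g [:: z b1; ..; z bi; 1 - z; b(i+1); ..; bq]],
   [zrestr g [:: b1; ..; bq] = g [:: z b1; ..; z bq]]. *)
Fixpoint htpy (g : seq D -> k) (s : seq D) : k :=
  match s with
  | [::] => - lcons zcompl g [::]
  | b :: s' => - lcons zcompl g (b :: s') - htpy (lcons (zmul b) g) s'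
  end.

Fixpoint zrestr (g : seq D -> k) (s : seq D) : k :=
  if s is b :: s' then zrestr (lcons (zmul b) g) s' else g [::].

Lemma htpy_cons g b s :
  htpy g (b :: s) = - lcons zcompl g (b :: s) - htpy (lcons (zmul b) g) s.
Proof. by []. Qed.

Lemma htpy_linop : linop htpy.
Proof.
move=> c f1 f2 s; elim: s f1 f2 => [|b s IH] f1 f2 /=; first by rewrite lcons_linop; ring.
rewrite (congr_op htpy (lcons_linop (zmul b) c f1 f2)) IH lcons_linop; ring.
Qed.

Lemma htpy_ext s f1 f2 :
  (forall v, size v = (size s).+1 -> f1 v = f2 v) -> htpy f1 s = htpy f2 s.
Proof.
elim: s f1 f2 => [|b s IH] f1 f2 f12 /=.
  by congr (- _); apply: eq_ev => d; apply: f12.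
congr (- _ - _); first by apply: eq_ev => d; apply: f12.
by apply: IH => v hv; apply: eq_ev => d; apply: f12 => /=; rewrite hv.
Qed.

Lemma htpy_aug_cons G b s :
  htpy (fun u => if u is d :: t then aug d * G t else 0) (b :: s) = - (aug b * htpy G s).
Proof.
rewrite htpy_cons {1}/lcons evZr ev_zcompl_aug mul0r oppr0 sub0r -(linopZ htpy_linop).
by congr (- _); apply: congr_op => t; rewrite /lcons evZr aug_zmul mulrC.
Qed.

Lemma htpy_lcons_mul_zmul a g b s :
  htpy (lcons_mul mul (zmul a) g) (b :: s)
  = - ((mul a b).1 * htpy (lcons (zmul (mul a b).2) g) s).
Proof.
rewrite htpy_cons lcons_zcompl_zmul oppr0 sub0r -(linopZ htpy_linop).
by congr (- _); apply: congr_op => t; rewrite lcons_zmul_zmul.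
Qed.

Lemma htpy_lcons_zmul p g a b s :
  htpy (delta p.+1 (lcons (zmul a) g)) (b :: s) + htpy (lcons (zmul a) (delta p.+2 g)) (b :: s)
  = aug a * htpy g (b :: s) + (mul a b).1 * htpy (lcons (zmul (mul a b).2) g) s
    - aug b * htpy (lcons (zmul a) g) s.
Proof.
rewrite -(linopD htpy_linop) (@htpy_ext _ _ (fun u => aug a * g u
    - lcons_mul mul (zmul a) g u + if u is d :: t then aug d * lcons (zmul a) g t else 0)).
  rewrite (linopD htpy_linop) (linopB htpy_linop) (linopZ htpy_linop).
  by rewrite htpy_lcons_mul_zmul htpy_aug_cons; ring.
by move=> [|d t] // _; rewrite bar_delta_lcons aug_zmul; ring.
Qed.

Lemma bar_delta_lcons_zcompl p g a b s :
  delta p (fun t => lcons zcompl g (a :: t)) (b :: s) =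
  lcons zcompl (delta p.+2 g) [:: a, b & s]
  - (mul a b).1 * lcons zcompl g ((mul a b).2 :: s) + aug b * lcons zcompl g (a :: s)
  + g [:: a, b & s] - lcons (zmul a) g (b :: s).
Proof.
have -> : delta p (fun t => lcons zcompl g (a :: t)) (b :: s) =
    aug a * lcons zcompl g (b :: s) - (mul a b).1 * lcons zcompl g ((mul a b).2 :: s)
    + aug b * lcons zcompl g (a :: s) - delta p.+1 (lcons zcompl g) [:: a, b & s].
  by rewrite bar_delta_cons2; ring.
rewrite bar_delta_lcons ev_zcompl_aug /lcons_mul (ev_zcompl_mulr a (fun d => g (d :: _))).
by rewrite -/(lcons (zmul a) g (b :: s)); ring.
Qed.

Lemma htpy_base g a :
  delta 0 (htpy g) [:: a] + htpy (delta 1 g) [:: a] = g [:: a] - zrestr g [:: a].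
Proof.
have delta1 x d : lcons x (delta 1 g) [:: d] =
    ev x aug * g [:: d] - lcons_mul mul x g [:: d] + aug d * lcons x g [::].
  have := bar_delta_lcons mul aug 0 x g d [::].
  by rewrite bar_delta_deg0 => /esym/eqP; rewrite subr_eq0 => /eqP ->.
rewrite bar_delta_deg0 add0r /=.
have -> : lcons zcompl (lcons (zmul a) (delta 1 g)) [::] = aug a * lcons zcompl g [::].
  rewrite {1}/lcons (eq_ev _ (fun d => delta1 (zmul a) d)) evD evB evZ evZr.
  have := lcons_zcompl_zmul a g [::]; rewrite /lcons => ->.
  by rewrite ev_zcompl_aug aug_zmul; ring.
rewrite delta1 ev_zcompl_aug /lcons_mul (ev_zcompl_mulr a (fun d => g [:: d])).
by rewrite -/(lcons (zmul a) g [::]); ring.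
Qed.

Theorem htpy_homotopy p s g : size s = p.+1 ->
  delta p (htpy g) s + htpy (delta p.+1 g) s = g s - zrestr g s.
Proof.
elim: s p g => [|a [|b s] IH] p g //; first by case: p => // _; exact: htpy_base.
case: p => [|p] // [hs].
have /(canRL (addrK _)) IHa := IH p (lcons (zmul a) g) (congr1 S hs).
have /(canRL (addKr _)) Z := htpy_lcons_zmul p g a b s.
rewrite bar_delta_cons2.
have -> : delta p (fun t => htpy g (a :: t)) (b :: s) =
    - delta p (fun t => lcons zcompl g (a :: t)) (b :: s)
    - delta p (htpy (lcons (zmul a) g)) (b :: s).
  by rewrite -(linopN (bar_delta_linop _ _ p)) -(linopB (bar_delta_linop _ _ p)).
rewrite IHa bar_delta_lcons_zcompl (htpy_cons (delta _ g)) Z.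
by rewrite (htpy_cons g (mul a b).2) (htpy_cons g a) [zrestr g _]/=; ring.
Qed.

Lemma zrestr_eq0 (P : pred D) g s :
  (forall b F, ~~ P b -> ev (zmul b) F = 0) -> ~~ all P s -> zrestr g s = 0.
Proof.
move=> killed; elim: s g => [|b s IH] g //=; case Pb: (P b) => /= notall; first exact: IH.
have -> : lcons (zmul b) g = fun _ => 0.
  by apply: functional_extensionality => t; rewrite /lcons killed ?Pb.
by elim: s {IH notall} => [|c s IH] //=; rewrite lcons0.
Qed.

End CentralIdempotent.

Section CochainMaps.
Variables (k : comPzRingType) (D1 D2 : Type).
Variables (mul1 : D1 -> D1 -> k * D1) (aug1 : D1 -> k).
Variables (mul2 : D2 -> D2 -> k * D2) (aug2 : D2 -> k).

Lemma chain_map_induces_hom q (phi : (seq D1 -> k) -> seq D2 -> k) :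
  linop phi ->
  (forall f f' s, (forall t, size t = size s -> f t = f' t) -> phi f s = phi f' s) ->
  (forall p f s, size s = p.+1 ->
     bar_delta mul2 aug2 p (phi f) s = phi (bar_delta mul1 aug1 p f) s) ->
  induces_hom mul1 aug1 mul2 aug2 q phi.
Proof.
move=> lin loc comm; split.
- move=> f cf s hs; rewrite comm // -(linop0 lin s); apply: loc => t ht.
  by apply: cf; rewrite ht.
- case: q => [|p] f.
    move=> f0 s hs; rewrite -(linop0 lin s); apply: loc => t ht.
    by apply: f0; rewrite ht.
  case=> y hy; exists (phi y) => s hs; rewrite comm //; apply: loc => t ht.
  by apply: hy; rewrite ht.
- move=> c f f' _ _; apply: is_coboundary_vanishing => s _ /=.
  by rewrite lin subrr.
Qed.

End CochainMaps.

Section Retract.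
Variables (k : comPzRingType) (D1 D2 : Type).
Variables (mul1 : D1 -> D1 -> k * D1) (aug1 : D1 -> k).
Variables (mul2 : D2 -> D2 -> k * D2) (aug2 : D2 -> k).
Variables (f : D2 -> D1) (r : D1 -> D2) (P : pred D1).
Hypothesis f_mul : forall a b, mul1 (f a) (f b) = ((mul2 a b).1, f (mul2 a b).2).
Hypothesis f_aug : forall a, aug1 (f a) = aug2 a.
Hypothesis P_f : forall a, P (f a).
Hypothesis fK : cancel f r.
Hypothesis rK : {in P, cancel r f}.
Hypothesis P_mul : forall a b, P (mul1 a b).2 -> P a && P b.
Hypothesis aug_notP : forall d, ~~ P d -> aug1 d = 0.

Local Notation delta1 := (bar_delta mul1 aug1).
Local Notation delta2 := (bar_delta mul2 aug2).

Definition comap (g : seq D1 -> k) : seq D2 -> k := fun t => g (map f t).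

Definition ext0 (h : seq D2 -> k) : seq D1 -> k :=
  fun t => if all P t then h (map r t) else 0.

Lemma bar_delta_comap p g s : delta2 p (comap g) s = delta1 p g (map f s).
Proof.
rewrite /bar_delta; congr (_ + _ + _).
- by case: s => [|x t] //=; rewrite f_aug.
- apply: eq_bigr => i _; congr (_ * _); rewrite /bar_merge -map_drop.
  by case: (drop i s) => [|a [|b t]] //=; rewrite f_mul /comap map_cat map_take.
- by case: s => [|x t] //=; rewrite /comap map_take last_map f_aug /=.
Qed.

Lemma comap_ext0 h : comap (ext0 h) =1 h.
Proof.
move=> t; rewrite /comap /ext0 all_map (eq_all P_f) all_predT -map_comp.
by rewrite (eq_map fK) map_id.
Qed.

Lemma map_rK s : all P s -> map f (map r s) = s.
Proof. by elim: s => //= d s IH /andP [Pd Ps]; rewrite rK // IH. Qed.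

Lemma bar_delta_ext0_notall p h s :
  size s = p.+1 -> ~~ all P s -> delta1 p (ext0 h) s = 0.
Proof.
move=> hs notPs; rewrite /bar_delta big1 => [|i _]; last first.
  rewrite /bar_merge /ext0; case E: (drop i s) => [|a [|b t]]; rewrite ?mulr0 //.
  case: ifP; rewrite ?mulr0 // all_cat /= => /and3P [Ptake /P_mul/andP [Pa Pb] Pt].
  by move: notPs; rewrite -(cat_take_drop i s) E all_cat /= Ptake Pa Pb Pt.
case: s hs notPs => [|x t] //= [hs] notPs; rewrite /ext0.
have -> : aug1 x * (if all P t then h (map r t) else 0) = 0.
  by case: (boolP (P x)) notPs => [_ /= /negbTE -> | /aug_notP ->]; rewrite ?mulr0 ?mul0r.
rewrite -mulrA; suff -> : (if all P (take p (x :: t)) then h (map r (take p (x :: t)))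
    else 0) * aug1 (last x t) = 0 by rewrite mulr0 add0r addr0.
have xt : x :: t = take p (x :: t) ++ [:: last x t].
  by rewrite lastI -cats1 -hs -(size_belast x t) take_size_cat.
case: ifP => [Ptake|]; rewrite ?mul0r //.
case: (boolP (P (last x t))) => [Plast|/aug_notP ->]; last by rewrite mulr0.
by move: notPs; rewrite -/(all P (x :: t)) xt all_cat Ptake /= Plast.
Qed.

Lemma bar_delta_ext0 p h s : size s = p.+1 -> delta1 p (ext0 h) s = ext0 (delta2 p h) s.
Proof.
move=> hs; case: (boolP (all P s)) => [Ps | notPs]; last first.
  by rewrite bar_delta_ext0_notall // /ext0 (negbTE notPs).
rewrite -{1}(map_rK Ps) -bar_delta_comap /ext0 Ps.
by apply: (congr_op (delta2 p)); exact: comap_ext0.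
Qed.

Lemma comap_induces_hom q : induces_hom mul1 aug1 mul2 aug2 q comap.
Proof.
apply: chain_map_induces_hom => [c g g' t //|g g' s gg'|p g s _].
- by apply: gg'; rewrite size_map.
- by rewrite bar_delta_comap.
Qed.

Lemma ext0_linop : linop ext0.
Proof. by move=> c h h' t; rewrite /ext0; case: ifP => _; ring. Qed.

Lemma ext0_induces_hom q : induces_hom mul2 aug2 mul1 aug1 q ext0.
Proof.
apply: chain_map_induces_hom ext0_linop _ bar_delta_ext0 => h h' s hh'.
by rewrite /ext0; case: ifP => // _; apply: hh'; rewrite size_map.
Qed.

Lemma ext0_comap_cohomologous q (H Z : (seq D1 -> k) -> seq D1 -> k) :
  linop H ->
  (forall s g g', (forall v, size v = (size s).+1 -> g v = g' v) -> H g s = H g' s) ->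
  (forall p s g, size s = p.+1 -> delta1 p (H g) s + H (delta1 p.+1 g) s = g s - Z g s) ->
  (forall g s, ~~ all P s -> Z g s = 0) ->
  forall g, is_cocycle mul1 aug1 q g ->
  is_coboundary mul1 aug1 q (fun s => ext0 (comap g) s - g s).
Proof.
move=> H_lin H_loc H_htpy Z0 g cg; case: q cg => [|p] cg.
  by case=> // _; rewrite /ext0 /comap /= subrr.
exists (fun s => ext0 (comap (H g)) s - H g s) => s hs.
have deltaHg : delta1 p (H g) s = g s - Z g s.
  rewrite -(H_htpy p) // (H_loc _ _ (fun _ => 0)) ?(linop0 H_lin) ?addr0 // => v hv.
  by apply: cg; rewrite hv hs.
rewrite (linopB (bar_delta_linop _ _ p)) bar_delta_ext0 // deltaHg /ext0.
case: ifP => [Ps | /negbT notPs]; last by rewrite Z0 // subr0 sub0r.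
by rewrite bar_delta_comap /comap map_rK // deltaHg !subrr.
Qed.

Lemma bar_H_iso_retract q (H Z : (seq D1 -> k) -> seq D1 -> k) :
  linop H ->
  (forall s g g', (forall v, size v = (size s).+1 -> g v = g' v) -> H g s = H g' s) ->
  (forall p s g, size s = p.+1 -> delta1 p (H g) s + H (delta1 p.+1 g) s = g s - Z g s) ->
  (forall g s, ~~ all P s -> Z g s = 0) ->
  bar_H_iso mul1 aug1 mul2 aug2 q.
Proof.
move=> H_lin H_loc H_htpy Z0; exists comap, ext0; split.
- exact: comap_induces_hom.
- exact: ext0_induces_hom.
- exact: ext0_comap_cohomologous H_lin H_loc H_htpy Z0.
- by move=> h _; apply: is_coboundary_vanishing => s _; rewrite comap_ext0 subrr.
Qed.

End Retract.

Section RookMonoid.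
Variable n : nat.
Implicit Types d : rook n.

Lemma rook_val_inj : injective (fun d : rook n => sval d).
Proof.
move=> [f1 h1] [f2 h2] /= e; subst f2.
by rewrite (proof_irrelevance _ h1 h2).
Qed.

Definition rook_dom d : {set 'I_n} := [set i | sval d i != None].
Definition rook_im d : {set 'I_n} := [set j | [exists i, sval d i == Some j]].
Definition rook_rank d : nat := #|rook_dom d|.
Definition rook_fun d (i : 'I_n) : 'I_n := odflt i (sval d i).
Definition rook_perm d : bool := [forall i, sval d i != None].

Lemma rook_fun_inj d : {in rook_dom d &, injective (rook_fun d)}.
Proof.
move=> i j; rewrite !inE /rook_fun.
case E1: (sval d i) => [a|] // _; case E2: (sval d j) => [b|] // _ /= ab; subst b.
exact: (proj2_sig d) E1 E2.
Qed.

Lemma rook_im_imset d : rook_im d = rook_fun d @: rook_dom d.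
Proof.
apply/setP => j; rewrite inE; apply/existsP/imsetP.
  by case=> i /eqP E; exists i; rewrite ?inE /rook_fun E.
case=> i; rewrite inE /rook_fun; case E: (sval d i) => [a|] //= _ ->.
by exists i; rewrite E.
Qed.

Lemma card_rook_im d : #|rook_im d| = rook_rank d.
Proof. by rewrite rook_im_imset card_in_imset //; exact: rook_fun_inj. Qed.

Lemma rook_comp_val d1 d2 i : sval (rook_comp d1 d2) i = obind (sval d2) (sval d1 i).
Proof. by rewrite /= ffunE. Qed.

(* Counting the vertices of the middle column: [beta] isolated ones, and the
   others are hit by [d1], have an edge in [d2], or both (a propagating edge
   of the composite). *)
Lemma rook_beta_rank d1 d2 :
  (rook_beta d1 d2 + rook_rank d1 + rook_rank d2 = n + rook_rank (rook_comp d1 d2))%N.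
Proof.
have -> : rook_beta d1 d2 = #|~: (rook_im d1 :|: rook_dom d2)|.
  apply: eq_card => j; rewrite !inE negb_or; congr andb; last by rewrite negbK.
  by rewrite negb_exists.
have <- : #|rook_im d1 :&: rook_dom d2| = rook_rank (rook_comp d1 d2).
  have -> : rook_im d1 :&: rook_dom d2 = rook_fun d1 @: rook_dom (rook_comp d1 d2).
    apply/setP => j; rewrite !inE; apply/andP/imsetP.
      case=> /existsP [i /eqP E] hj; exists i; last by rewrite /rook_fun E.
      by rewrite inE rook_comp_val E.
    case=> i; rewrite inE rook_comp_val /rook_fun.
    by case E: (sval d1 i) => [a|] //= h ->; split=> //; apply/existsP; exists i; rewrite E.
  rewrite card_in_imset // => i j; rewrite !inE !rook_comp_val => hi hj.
  by apply: rook_fun_inj; rewrite inE; [move: hi | move: hj]; case: (sval d1 _).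
have := cardsC (rook_im d1 :|: rook_dom d2); have := cardsUI (rook_im d1) (rook_dom d2).
by rewrite card_ord card_rook_im /rook_rank; lia.
Qed.

Lemma rook_compA d1 d2 d3 :
  rook_comp (rook_comp d1 d2) d3 = rook_comp d1 (rook_comp d2 d3).
Proof.
apply: rook_val_inj; apply/ffunP => i; rewrite /= !ffunE.
by case: (sval d1 i) => //= a; rewrite ffunE.
Qed.

Lemma rook_betaA d1 d2 d3 :
  (rook_beta d1 d2 + rook_beta (rook_comp d1 d2) d3 =
   rook_beta d2 d3 + rook_beta d1 (rook_comp d2 d3))%N.
Proof.
have := rook_beta_rank d1 d2; have := rook_beta_rank (rook_comp d1 d2) d3.
have := rook_beta_rank d2 d3; have := rook_beta_rank d1 (rook_comp d2 d3).
rewrite rook_compA; lia.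
Qed.

Definition rook_id (A : {set 'I_n}) : rook n.
Proof.
exists [ffun i => if i \in A then Some i else None].
move=> i j x; rewrite !ffunE.
by case: (i \in A) => // -[->]; case: (j \in A) => // -[].
Defined.

Lemma rook_id_val A i : sval (rook_id A) i = if i \in A then Some i else None.
Proof. by rewrite /= ffunE. Qed.

Definition rook1 : rook n := rook_id [set: 'I_n].

Lemma rook1_val i : sval rook1 i = Some i.
Proof. by rewrite rook_id_val inE. Qed.

Lemma rook_beta1d d : rook_beta rook1 d = 0%N.
Proof.
apply: eq_card0 => j; rewrite !inE; apply/negbTE/nandP; left.
by rewrite negb_forall; apply/existsP; exists j; rewrite rook1_val negbK.
Qed.

Lemma rook_betad1 d : rook_beta d rook1 = 0%N.
Proof. by apply: eq_card0 => j; rewrite !inE rook1_val andbF. Qed.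

Lemma rook_comp1d d : rook_comp rook1 d = d.
Proof. by apply: rook_val_inj; apply/ffunP => i; rewrite rook_comp_val rook1_val. Qed.

Lemma rook_compd1 d : rook_comp d rook1 = d.
Proof.
apply: rook_val_inj; apply/ffunP => i; rewrite rook_comp_val.
by case: (sval d i) => //= a; rewrite rook1_val.
Qed.

Lemma rook_permE d : rook_perm d = (rook_rank d == n).
Proof.
rewrite /rook_rank; apply/forallP/eqP => [Pd | rank_n i].
  have -> : rook_dom d = [set: 'I_n] by apply/setP => i; rewrite !inE Pd.
  by rewrite cardsT card_ord.
have : rook_dom d = [set: 'I_n].
  by apply/eqP; rewrite eqEcard subsetT cardsT card_ord rank_n leqnn.
by move/setP/(_ i); rewrite !inE.
Qed.

Lemma rook_perm_im d j : rook_perm d -> j \in rook_im d.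
Proof.
rewrite rook_permE => /eqP rank_n; suff -> : rook_im d = [set: 'I_n] by rewrite inE.
by apply/eqP; rewrite eqEcard subsetT cardsT card_ord card_rook_im rank_n leqnn.
Qed.

Lemma rook_notperm_dom d : ~~ rook_perm d -> exists i, sval d i = None.
Proof. by rewrite negb_forall => /existsP [i]; rewrite negbK => /eqP; exists i. Qed.

Lemma rook_notperm_im d : ~~ rook_perm d -> exists j, j \notin rook_im d.
Proof.
rewrite rook_permE -card_rook_im => rank_n; apply/existsP.
apply: contraR rank_n => /existsPn im_full.
suff -> : rook_im d = [set: 'I_n] by rewrite cardsT card_ord.
by apply/setP => j; rewrite in_setT; exact: negbNE (im_full j).
Qed.

Lemma rook_perm_comp d1 d2 : rook_perm (rook_comp d1 d2) -> rook_perm d1 && rook_perm d2.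
Proof.
move=> /forallP P12; have P1 : rook_perm d1.
  by apply/forallP => i; move: (P12 i); rewrite rook_comp_val; case: (sval d1 i).
rewrite P1; apply/forallP => j.
have := rook_perm_im j P1; rewrite inE => /existsP [i /eqP E].
by move: (P12 i); rewrite rook_comp_val E.
Qed.

End RookMonoid.

Lemma sum_set_pairs (R : nmodType) (T : finType) (G : {set T} -> R) (j : T) :
  \sum_(A : {set T}) G A = \sum_(A : {set T} | j \notin A) (G A + G (j |: A)).
Proof.
rewrite (bigID (fun A : {set T} => j \in A)) /= addrC big_split /=; congr (_ + _).
rewrite (reindex_onto (fun A => j |: A) (fun A => A :\ j)) /=; last first.
  by move=> A jA; rewrite setD1K.
apply: eq_bigl => A; rewrite setU11 /=.
by apply/eqP/idP => [<-|jA]; [rewrite setD11 | rewrite setU1K].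
Qed.

Section RookAlgebra.
Variables (k : comPzRingType) (n : nat) (eps : k).
Implicit Types d : rook n.
Local Notation mulR := (@rook_mul k n eps).
Local Notation augR := (@rook_aug k n).

Lemma rook_mul1d d : mulR (rook1 n) d = (1, d).
Proof. by rewrite /rook_mul rook_beta1d rook_comp1d expr0. Qed.

Lemma rook_muld1 d : mulR d (rook1 n) = (1, d).
Proof. by rewrite /rook_mul rook_betad1 rook_compd1 expr0. Qed.

Lemma rook_mulA_coef a b c :
  (mulR a b).1 * (mulR (mulR a b).2 c).1 = (mulR b c).1 * (mulR a (mulR b c).2).1.
Proof. by rewrite /rook_mul /= -!exprD rook_betaA. Qed.

Lemma rook_mulA_basis a b c : (mulR (mulR a b).2 c).2 = (mulR a (mulR b c).2).2.
Proof. exact: rook_compA. Qed.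

Lemma rook_augE d : augR d = if rook_perm d then 1 else 0.
Proof. by []. Qed.

Lemma rook_aug_notperm d : ~~ rook_perm d -> augR d = 0.
Proof. by rewrite rook_augE => /negbTE ->. Qed.

End RookAlgebra.

Section RookIdempotent.
Variables (k : comPzRingType) (n : nat) (eps eps' : k).
Hypothesis eps_inv : eps * eps' = 1.
Implicit Types (d : rook n) (A : {set 'I_n}).
Local Notation mulR := (@rook_mul k n eps).
Local Notation augR := (@rook_aug k n).

Definition rook_z : seq (k * rook n) :=
  [seq ((- eps') ^+ (n - #|A|), rook_id A) | A <- index_enum {set 'I_n}].

Lemma ev_rook_z F :
  ev rook_z F = \sum_(A : {set 'I_n}) (- eps') ^+ (n - #|A|) * F (rook_id A).
Proof. by rewrite /ev big_map. Qed.

Lemma subn_cardsU1 A j : j \notin A -> (n - #|A| = (n - #|j |: A|).+1)%N.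
Proof.
move=> jA; have := cardsU1 j A; rewrite jA /= => cardU.
have : (#|j |: A| <= n)%N by rewrite -[X in (_ <= X)%N](card_ord n) max_card.
by rewrite cardU; lia.
Qed.

Lemma rook_z_pair0 (N B : nat) (X : k) :
  (- eps') ^+ N.+1 * (eps ^+ B.+1 * X) + (- eps') ^+ N * (eps ^+ B * X) = 0.
Proof.
have -> : (- eps') ^+ N.+1 * (eps ^+ B.+1 * X) + (- eps') ^+ N * (eps ^+ B * X)
    = (- eps') ^+ N * eps ^+ B * X * (1 - eps * eps') by rewrite !exprS; ring.
by rewrite eps_inv subrr mulr0.
Qed.

Lemma rook_id_notin_im A j : [forall i, sval (rook_id A) i != Some j] = (j \notin A).
Proof.
apply/forallP/idP => [notim | jA i].
  by apply/negP => jA; move: (notim j); rewrite rook_id_val jA eqxx.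
rewrite rook_id_val; case: ifP => // iA; apply/eqP => -[ij].
by move: jA; rewrite -ij iA.
Qed.

Lemma rook_mul_z_notim d j F : j \notin rook_im d ->
  ev rook_z (fun e => (mulR d e).1 * F (mulR d e).2) = 0.
Proof.
rewrite inE negb_exists => /forallP notim.
rewrite ev_rook_z (sum_set_pairs _ j); apply: big1 => A jA /=.
have comp_eq : rook_comp d (rook_id (j |: A)) = rook_comp d (rook_id A).
  apply: rook_val_inj; apply/ffunP => i; rewrite !rook_comp_val.
  case E: (sval d i) (notim i) => [l|] //= lj; rewrite !rook_id_val in_setU1.
  by have /negbTE -> : l != j by apply: contraNneq lj => ->.
have beta_eq : rook_beta d (rook_id A) = (rook_beta d (rook_id (j |: A))).+1.
  rewrite /rook_beta (cardD1 j) inE /= rook_id_val (negbTE jA) eqxx andbT.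
  rewrite (introT forallP notim) add1n; congr S; apply: eq_card => l.
  rewrite !inE !rook_id_val in_setU1.
  by case: (l == j); rewrite ?andbF ?andbT //=; case: (l \in A).
by rewrite /rook_mul /= (subn_cardsU1 jA) comp_eq beta_eq rook_z_pair0.
Qed.

Lemma rook_z_mul_notdom d i F : sval d i = None ->
  ev rook_z (fun e => (mulR e d).1 * F (mulR e d).2) = 0.
Proof.
move=> di; rewrite ev_rook_z (sum_set_pairs _ i); apply: big1 => A iA /=.
have comp_eq : rook_comp (rook_id (i |: A)) d = rook_comp (rook_id A) d.
  apply: rook_val_inj; apply/ffunP => l; rewrite !rook_comp_val !rook_id_val in_setU1.
  by case: (eqVneq l i) => [->|] /=; rewrite ?(negbTE iA) ?di.
have beta_eq : rook_beta (rook_id A) d = (rook_beta (rook_id (i |: A)) d).+1.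
  rewrite /rook_beta (cardD1 i) inE /= rook_id_notin_im iA di eqxx /= add1n; congr S.
  apply: eq_card => l; rewrite !inE !rook_id_notin_im in_setU1 negb_or.
  by case: (l == i).
by rewrite /rook_mul /= (subn_cardsU1 iA) comp_eq beta_eq rook_z_pair0.
Qed.

Lemma rook_mul_z_notperm d F : ~~ rook_perm d ->
  ev rook_z (fun e => (mulR d e).1 * F (mulR d e).2) = 0.
Proof. by move/rook_notperm_im => [j]; exact: rook_mul_z_notim. Qed.

Lemma rook_z_mul_notperm d F : ~~ rook_perm d ->
  ev rook_z (fun e => (mulR e d).1 * F (mulR e d).2) = 0.
Proof. by move/rook_notperm_dom => [i]; exact: rook_z_mul_notdom. Qed.

Lemma rook_perm_id A : rook_perm (rook_id A) = (A == setT).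
Proof.
apply/forallP/eqP => [PA | -> i]; last by rewrite rook_id_val inE.
by apply/setP => i; move: (PA i); rewrite rook_id_val inE; case: (i \in A).
Qed.

(* A permutation conjugates [rook_id A] into [rook_id (d @: A)], so it permutes
   the summands of [rook_z]. *)
Lemma rook_mul_z_perm d F : rook_perm d ->
  ev rook_z (fun e => (mulR d e).1 * F (mulR d e).2) =
  ev rook_z (fun e => (mulR e d).1 * F (mulR e d).2).
Proof.
move=> Pd; have d_inj : injective (rook_fun d).
  by move=> i j; apply: rook_fun_inj; rewrite inE; move/forallP: Pd => ->.
have beta0 A : (rook_beta d (rook_id A) = 0%N) * (rook_beta (rook_id A) d = 0%N).
  split; apply: eq_card0 => j; rewrite !inE; last first.
    by move/forallP: Pd => /(_ j) /negbTE ->; rewrite andbF.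
  have := rook_perm_im j Pd; rewrite inE => /existsP [i /eqP E].
  by apply/negbTE/nandP; left; rewrite negb_forall; apply/existsP; exists i; rewrite E negbK.
rewrite !ev_rook_z (reindex_inj (imset_inj d_inj)) /=; apply: eq_bigr => A _.
rewrite /rook_mul /= !(beta0 A) !(beta0 (rook_fun d @: A)) card_imset //.
congr (_ * (_ * F _)); apply: rook_val_inj; apply/ffunP => i; rewrite !rook_comp_val.
have : sval d i != None by move/forallP: Pd.
rewrite /rook_fun; case E: (sval d i) => [a|] //= _; rewrite !rook_id_val.
have -> : a = rook_fun d i by rewrite /rook_fun E.
by rewrite mem_imset //; case: (i \in A) => //=; rewrite /rook_fun E.
Qed.

Lemma rook_z_central d F :
  ev (cmul mulR (cbasis d) rook_z) F = ev (cmul mulR rook_z (cbasis d)) F.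
Proof.
rewrite !ev_cmul ev_basis; under [RHS]eq_ev do rewrite ev_basis.
case Pd: (rook_perm d); first exact: rook_mul_z_perm.
by rewrite rook_mul_z_notperm ?Pd // rook_z_mul_notperm ?Pd.
Qed.

Lemma rook_z_idem F : ev (cmul mulR rook_z rook_z) F = ev rook_z F.
Proof.
rewrite ev_cmul ev_rook_z (bigD1 setT) //= big1 => [|A /negbTE notT]; last first.
  by rewrite rook_mul_z_notperm ?mulr0 // rook_perm_id notT.
rewrite addr0 cardsT card_ord subnn expr0 mul1r.
by apply: eq_ev => e; rewrite -/(rook1 n) rook_beta1d rook_comp1d expr0 mul1r.
Qed.

Lemma rook_aug_zmul d : ev (cmul mulR rook_z (cbasis d)) augR = augR d.
Proof.
rewrite ev_cmul; under eq_ev do rewrite ev_basis.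
case Pd: (rook_perm d); last by rewrite rook_z_mul_notperm ?Pd // rook_augE Pd.
rewrite ev_rook_z (bigD1 setT) //= big1 => [|A /negbTE notT]; last first.
  rewrite rook_augE; case: ifP => [/rook_perm_comp|]; rewrite ?mulr0 //.
  by rewrite rook_perm_id notT.
rewrite addr0 cardsT card_ord subnn expr0 mul1r /= -/(rook1 n).
by rewrite rook_beta1d rook_comp1d expr0 mul1r.
Qed.

Lemma rook_zrestr_notperm g s :
  ~~ all (@rook_perm n) s -> zrestr mulR rook_z g s = 0.
Proof. by apply: zrestr_eq0 => b F notPb; rewrite ev_zmul rook_z_mul_notperm. Qed.

End RookIdempotent.

Section RookPermutations.
Variables (k : comPzRingType) (n : nat) (eps : k).
Local Notation mulR := (@rook_mul k n eps).
Local Notation augR := (@rook_aug k n).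
Local Notation mulS := (@sym_mul k n).
Local Notation augS := (@sym_aug k n).

Definition rook_of_perm (s : {perm 'I_n}) : rook n.
Proof.
exists [ffun i => Some (s i)].
by move=> i j x; rewrite !ffunE => -[<-] [/perm_inj].
Defined.

Lemma rook_of_perm_val s i : sval (rook_of_perm s) i = Some (s i).
Proof. by rewrite /= ffunE. Qed.

Definition perm_of_rook (d : rook n) : {perm 'I_n} :=
  odflt 1%g [pick s : {perm 'I_n} | sval (rook_of_perm s) == sval d].

Lemma rook_perm_of_perm s : rook_perm (rook_of_perm s).
Proof. by apply/forallP => i; rewrite rook_of_perm_val. Qed.

Lemma rook_of_permK : cancel rook_of_perm perm_of_rook.
Proof.
move=> s; rewrite /perm_of_rook; case: pickP => [t /eqP st | /(_ s)]; last by rewrite eqxx.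
by apply/permP => i; move/ffunP: st => /(_ i); rewrite !ffunE => -[].
Qed.

Lemma perm_of_rookK : {in @rook_perm n, cancel perm_of_rook rook_of_perm}.
Proof.
move=> d Pd; rewrite /perm_of_rook; case: pickP => [s /eqP sd | none] /=.
  exact: rook_val_inj.
have d_inj : injective (rook_fun d).
  by move=> i j; apply: rook_fun_inj; rewrite inE; move/forallP: Pd => ->.
suff: sval (rook_of_perm (perm d_inj)) == sval d by rewrite none.
apply/eqP/ffunP => i; rewrite rook_of_perm_val permE /rook_fun.
by move/forallP: Pd => /(_ i); case: (sval d i).
Qed.

Lemma rook_mul_of_perm a b :
  mulR (rook_of_perm a) (rook_of_perm b) =
  ((mulS a b).1, rook_of_perm (mulS a b).2).
Proof.
rewrite /rook_mul /sym_mul /=; congr pair.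
  suff -> : rook_beta (rook_of_perm a) (rook_of_perm b) = 0%N by [].
  by apply: eq_card0 => j; rewrite !inE rook_of_perm_val andbF.
apply: rook_val_inj; apply/ffunP => i.
by rewrite rook_comp_val !rook_of_perm_val /= rook_of_perm_val permM.
Qed.

Lemma rook_aug_of_perm s : augR (rook_of_perm s) = augS s.
Proof. by rewrite rook_augE rook_perm_of_perm. Qed.

End RookPermutations.

Theorem theorem7p10 (k : comPzRingType) (n : nat) (eps : k) :
  (0 < n)%N -> (exists eps' : k, eps * eps' = 1) ->
  graded_H_iso (@rook_mul k n eps) (@rook_aug k n)
               (@sym_mul k n) (@sym_aug k n).
Proof.
move=> _ [eps' eps_inv] q.
have z_homotopy := htpy_homotopy (rook_mul1d (n := n) eps) (rook_muld1 eps)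
  (rook_mulA_coef eps) (rook_mulA_basis eps)
  (rook_z_central eps_inv) (rook_z_idem eps_inv) (rook_aug_zmul eps_inv).
apply: (bar_H_iso_retract (rook_mul_of_perm eps) (@rook_aug_of_perm k n)
  (@rook_perm_of_perm n) (@rook_of_permK n) (@perm_of_rookK n) (@rook_perm_comp n)
  (@rook_aug_notperm k n) q (htpy_linop _ _ _) (htpy_ext _ _ _) z_homotopy).
exact: rook_zrestr_notperm eps_inv.
Qed.
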